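(* Let $m\in\mathbb{N}$, let $\alpha,\beta,\mu\in\mathbb{C}$ with $\alpha,\frac{1+\alpha+\beta}{2}\notin\mathbb{Z}_0^-$, $\Re(\beta)>0$ and $\Re(\mu)>0$. Then \[ \int_0^\infty t^{\beta-1}e^{-\mu t}\,{}_2F_2\left[\begin{array}{r} -m,\ \alpha;\\ -2m,\ \tfrac{1+\alpha+\beta}{2};\end{array}\mu t\right]_m dt=\frac{\Gamma(\beta)}{\mu^{\beta}}\frac{\left(\frac{1+\alpha}{2}\right)_m\left(\frac{1+\beta}{2}\right)_m}{\left(\frac{1}{2}\right)_m\left(\frac{1+\alpha+\beta}{2}\right)_m}. \]
   Context: $\mathbb{N}=\{1,2,3,\dots\}$, $\mathbb{Z}_0^-=\{0,-1,-2,\dots\}$. For $a\in\mathbb{C}$ and $n\in\mathbb{N}_0$, $(a)_0=1$ and $(a)_n=a(a+1)\cdots(a+n-1)$. For $N\in\mathbb{N}_0$, the truncated series is ${}_2F_2\left[\begin{array}{r} a_1,a_2;\\ b_1,b_2;\end{array}z\right]_N=\sum_{n=0}^{N}\frac{(a_1)_n(a_2)_n}{(b_1)_n(b_2)_n}\frac{z^n}{n!}$ (first $N+1$ terms). The left side is the Mellin transform $\int_0^\infty t^{s-1}f(t)\,dt$ at $s=\beta$; $\mu^{\beta}$ denotes the principal power. *)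

From Stdlib Require Import Reals List Arith Factorial.
From Coquelicot Require Import Coquelicot.
Open Scope R_scope.

Definition Cexp (z : C) : C :=
  (exp (fst z) * cos (snd z), exp (fst z) * sin (snd z)).

(* principal argument, in (-PI, PI] (0 for z = 0) *)
Definition Carg (z : C) : R :=
  let x := fst z in let y := snd z in
  if Rlt_dec 0 x then atan (y / x)
  else if Rlt_dec x 0 then
    (if Rle_dec 0 y then atan (y / x) + PI else atan (y / x) - PI)
  else if Rlt_dec 0 y then PI / 2
  else if Rlt_dec y 0 then - (PI / 2)
  else 0.

Definition CLog (z : C) : C := (ln (Cmod z), Carg z).

(* principal power z^w (0^w := 0) *)
Definition Cpowc (z w : C) : C :=
  if Ceq_dec z 0 then 0%C else Cexp (w * CLog z)%C.

Fixpoint poch (a : C) (n : nat) : C :=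
  match n with
  | O => 1%C
  | S k => (poch a k * (a + RtoC (INR k)))%C
  end.

(* truncated 2F2: first N+1 terms *)
Definition F22_trunc (a1 a2 b1 b2 z : C) (N : nat) : C :=
  fold_right Cplus 0%C
    (map (fun n => (poch a1 n * poch a2 n / (poch b1 n * poch b2 n)
                     * Cpow z n / RtoC (INR (fact n)))%C)
         (seq 0 (S N))).

Definition CGamma (s : C) : C :=
  @RInt_gen C_R_CompleteNormedModule
    (fun t => (Cpowc (RtoC t) (s - 1) * RtoC (exp (- t)))%C)
    (at_right 0) (Rbar_locally p_infty).

From Stdlib Require Import Reals Lra Lia List Factorial.
From Coquelicot Require Import Coquelicot.
Open Scope R_scope.

(* Expanding the truncated 2F2 and integrating term by term, the claim splits into an
   analytic and an algebraic identity.

   Analytic: for Re s > 0 and Re mu > 0,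
   int_0^oo t^(s-1) e^(-mu t) (mu t)^n dt = (s)_n Gamma(s) / mu^s.
   Integration by parts gives s I(s) = mu I(s+1), which reduces this to n = 0.
   For n = 0 let mu^u = exp(u Log mu). On a segment [a, b] the function
   u |-> mu^(u s) int_a^b t^(s-1) e^(-mu^u t) dt has derivative
   mu^(u s) Log mu [t^s e^(-mu^u t)]_a^b (integrate by parts once more), and this
   boundary term tends to 0 as a -> 0+, b -> +oo uniformly in u in [0, 1], because
   |arg mu| < PI/2 keeps Re mu^u away from 0. Comparing u = 1 with u = 0 gives
   mu^s I_mu(s) = Gamma(s).

   Algebraic: sum_(n <= m) (-m)_n (alpha)_n (beta)_n / ((-2m)_n (c)_n n!) with
   c = (1 + alpha + beta)/2 equals ((1+alpha)/2)_m ((1+beta)/2)_m / ((1/2)_m (c)_m),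
   a terminating Watson-type summation; it is proved by induction on m, the
   sums for m and m + 1 being related by a Wilf-Zeilberger certificate. *)

Notation Cis_derive f x l := (@is_derive R_AbsRing C_R_NormedModule f x l).
Notation Ccontinuous f x := (@continuous _ C_R_NormedModule f x).
Notation Cis_RInt f a b l := (@is_RInt C_R_NormedModule f a b l).
Notation Cis_RInt_0_oo f l :=
  (@is_RInt_gen C_R_NormedModule f (at_right 0) (Rbar_locally p_infty) l).

(* [ring] and [field] only see an equation at type [C], not at the carrier of
   a Coquelicot structure that reduces to [C]. *)
Ltac C_ring := match goal with |- ?a = ?b => change (@eq C a b) end; ring.
Ltac C_field := match goal with |- ?a = ?b => change (@eq C a b) end; field.

Lemma C_ext (z w : C) : fst z = fst w -> snd z = snd w -> z = w.
Proof. destruct z, w; simpl; intros; subst; reflexivity. Qed.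

Lemma C_neq_0_of_fst (z : C) : fst z <> 0 -> z <> RtoC 0.
Proof. intros Hx Hz. apply Hx. rewrite Hz. reflexivity. Qed.

Ltac C_neq_0 := apply C_neq_0_of_fst; simpl; lra.

Lemma norm_C_R (z : C) : @norm _ C_R_NormedModule z = Cmod z.
Proof.
  unfold norm; simpl; unfold prod_norm, Cmod; simpl. f_equal.
  change (@norm _ R_NormedModule (fst z)) with (Rabs (fst z)).
  change (@norm _ R_NormedModule (snd z)) with (Rabs (snd z)).
  rewrite !Rmult_1_r, <- !Rabs_mult, !Rabs_right; nra.
Qed.

Lemma plus_C_R (z w : C) : @plus C_R_NormedModule z w = (z + w)%C.
Proof. reflexivity. Qed.

Lemma minus_C_R (z w : C) : @minus C_R_NormedModule z w = (z - w)%C.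
Proof. reflexivity. Qed.

Lemma scal_C_R (k : R) (z : C) : @scal _ C_R_NormedModule k z = (RtoC k * z)%C.
Proof.
  apply C_ext; destruct z; simpl; unfold prod_scal; simpl;
  unfold scal; simpl; unfold mult; simpl; ring.
Qed.

Lemma C_R_decomp (z : C) :
  z = @plus C_R_NormedModule (@scal _ C_R_NormedModule (fst z) (RtoC 1))
        (@scal _ C_R_NormedModule (snd z) Ci).
Proof. rewrite plus_C_R, !scal_C_R. apply C_ext; destruct z; simpl; ring. Qed.

Lemma Cmod_le_abs (z : C) : Cmod z <= Rabs (fst z) + Rabs (snd z).
Proof.
  unfold Cmod. rewrite <- (sqrt_pow2 (Rabs (fst z) + Rabs (snd z))).
  2:{ generalize (Rabs_pos (fst z)) (Rabs_pos (snd z)); lra. }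
  apply sqrt_le_1_alt.
  rewrite <- (pow2_abs (fst z)), <- (pow2_abs (snd z)).
  generalize (Rabs_pos (fst z)) (Rabs_pos (snd z)); intros; nra.
Qed.

Lemma ball_C_R_Cmod (z w : C) (e : R) :
  @ball C_R_NormedModule z e w -> Cmod (w - z)%C < 2 * e.
Proof.
  intros [H1 H2]. change (Rabs (fst w - fst z) < e) in H1.
  change (Rabs (snd w - snd z) < e) in H2.
  eapply Rle_lt_trans. apply Cmod_le_abs.
  replace (fst (w - z)%C) with (fst w - fst z) by (simpl; ring).
  replace (snd (w - z)%C) with (snd w - snd z) by (simpl; ring). lra.
Qed.

Lemma exp_le (x y : R) : x <= y -> exp x <= exp y.
Proof. intros [H|<-]; [left; apply exp_increasing; exact H | lra]. Qed.

Lemma Cexp_add (z w : C) : Cexp (z + w)%C = (Cexp z * Cexp w)%C.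
Proof.
  unfold Cexp; apply C_ext; simpl; rewrite exp_plus;
  [rewrite cos_plus | rewrite sin_plus]; ring.
Qed.

Lemma Cmod_Cexp (z : C) : Cmod (Cexp z) = exp (fst z).
Proof.
  unfold Cexp, Cmod; cbn [fst snd].
  replace ((exp (fst z) * cos (snd z)) ^ 2 + (exp (fst z) * sin (snd z)) ^ 2)
    with (exp (fst z) ^ 2).
  - apply sqrt_pow2. left; apply exp_pos.
  - generalize (sin2_cos2 (snd z)); unfold Rsqr; intro H.
    transitivity (exp (fst z) ^ 2 * (sin (snd z) * sin (snd z) + cos (snd z) * cos (snd z)));
      [rewrite H|]; ring.
Qed.

Lemma Cexp_RtoC (x : R) : Cexp (RtoC x) = RtoC (exp x).
Proof. unfold Cexp; apply C_ext; simpl; rewrite ?cos_0, ?sin_0; ring. Qed.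

Lemma Cexp_neq_0 (z : C) : Cexp z <> RtoC 0.
Proof.
  intro H. generalize (Cmod_Cexp z) (exp_pos (fst z)).
  rewrite H, Cmod_0. lra.
Qed.

Lemma Carg_pos (z : C) : 0 < fst z -> Carg z = atan (snd z / fst z).
Proof. intro H. unfold Carg. destruct (Rlt_dec 0 (fst z)); [reflexivity | lra]. Qed.

Lemma CLog_RtoC (t : R) : 0 < t -> CLog (RtoC t) = RtoC (ln t).
Proof.
  intro Ht. unfold CLog. rewrite Carg_pos by (simpl; lra).
  rewrite Cmod_R, Rabs_right by lra. simpl.
  replace (0 / t) with 0 by (field; lra). rewrite atan_0. reflexivity.
Qed.

Lemma Cexp_CLog (z : C) : 0 < fst z -> Cexp (CLog z) = z.
Proof.
  intro Hx. destruct z as [x y]. simpl in Hx.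
  assert (Hr : 0 < Cmod (x, y)).
  { apply Cmod_gt_0. C_neq_0. }
  unfold CLog, Cexp. rewrite Carg_pos by (simpl; lra). simpl.
  rewrite exp_ln, cos_atan, sin_atan by exact Hr.
  assert (E : sqrt (1 + (y / x)²) = Cmod (x, y) / x).
  { rewrite <- (sqrt_Rsqr (Cmod (x, y) / x)) by (apply Rlt_le, Rdiv_lt_0_compat; auto).
    f_equal. unfold Rsqr, Cmod. simpl.
    replace (sqrt (x * (x * 1) + y * (y * 1)) / x * (sqrt (x * (x * 1) + y * (y * 1)) / x))
      with ((sqrt (x * (x * 1) + y * (y * 1)))² / (x * x)) by (unfold Rsqr; field; lra).
    rewrite Rsqr_sqrt by nra. field. lra. }
  rewrite E. apply C_ext; simpl; field; split; lra.
Qed.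

Lemma Cpowc_re_pos (z w : C) : 0 < fst z -> Cpowc z w = Cexp (w * CLog z)%C.
Proof.
  intro Hz. unfold Cpowc. destruct (Ceq_dec z 0) as [E|E]; [|reflexivity].
  rewrite E in Hz. simpl in Hz. lra.
Qed.

Lemma Cpowc_RtoC (t : R) (w : C) : 0 < t -> Cpowc (RtoC t) w = Cexp (w * RtoC (ln t))%C.
Proof. intro Ht. rewrite Cpowc_re_pos, CLog_RtoC by (simpl; lra). reflexivity. Qed.

Lemma is_derive_eq {K : AbsRing} {V : NormedModule K} (f : K -> V) x l l' :
  is_derive f x l -> l = l' -> is_derive f x l'.
Proof. intros H <-; exact H. Qed.

Lemma is_derive_Rmult (f g : R -> R) x a b :
  is_derive f x a -> is_derive g x b ->
  is_derive (fun t => f t * g t) x (a * g x + f x * b).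
Proof. intros Ha Hb. apply (is_derive_mult f g x a b Ha Hb). intros; apply Rmult_comm. Qed.

Lemma is_derive_Rcomp (f g : R -> R) x a b :
  is_derive f (g x) a -> is_derive g x b ->
  is_derive (fun t => f (g t)) x (a * b).
Proof.
  intros Ha Hb. replace (a * b) with (scal b a) by (unfold scal; simpl; unfold mult; simpl; ring).
  exact (is_derive_comp f g x a b Ha Hb).
Qed.

Lemma Cis_derive_components (f : R -> C) x (l : C) :
  is_derive (fun t => fst (f t)) x (fst l) ->
  is_derive (fun t => snd (f t)) x (snd l) ->
  Cis_derive f x l.
Proof.
  intros H1 H2.
  apply (is_derive_ext (fun t => @plus C_R_NormedModule
          (@scal _ C_R_NormedModule (fst (f t)) (RtoC 1))
          (@scal _ C_R_NormedModule (snd (f t)) Ci))).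
  { intro t; symmetry; apply C_R_decomp. }
  rewrite (C_R_decomp l).
  apply (@is_derive_plus R_AbsRing C_R_NormedModule);
  apply (@is_derive_scal_l R_AbsRing C_R_NormedModule); assumption.
Qed.

Lemma Cis_derive_fst (f : R -> C) x (l : C) :
  Cis_derive f x l -> is_derive (fun t => fst (f t)) x (fst l).
Proof.
  intro H. eapply filterdiff_ext_lin.
  - apply (filterdiff_comp f (@fst R R) _ (@fst R R) H).
    apply filterdiff_linear, (@is_linear_fst R_AbsRing R_NormedModule R_NormedModule).
  - reflexivity.
Qed.

Lemma Cis_derive_snd (f : R -> C) x (l : C) :
  Cis_derive f x l -> is_derive (fun t => snd (f t)) x (snd l).
Proof.
  intro H. eapply filterdiff_ext_lin.
  - apply (filterdiff_comp f (@snd R R) _ (@snd R R) H).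
    apply filterdiff_linear, (@is_linear_snd R_AbsRing R_NormedModule R_NormedModule).
  - reflexivity.
Qed.

Lemma Cis_derive_mult (f g : R -> C) x (a b : C) :
  Cis_derive f x a -> Cis_derive g x b ->
  Cis_derive (fun t => (f t * g t)%C) x (a * g x + f x * b)%C.
Proof.
  intros Ha Hb.
  assert (Ha1 := Cis_derive_fst _ _ _ Ha). assert (Ha2 := Cis_derive_snd _ _ _ Ha).
  assert (Hb1 := Cis_derive_fst _ _ _ Hb). assert (Hb2 := Cis_derive_snd _ _ _ Hb).
  apply Cis_derive_components; simpl.
  - eapply is_derive_eq.
    + apply (is_derive_minus (V := R_NormedModule)); apply is_derive_Rmult; eassumption.
    + unfold minus, plus, opp; simpl; ring.
  - eapply is_derive_eq.
    + apply (is_derive_plus (V := R_NormedModule)); apply is_derive_Rmult; eassumption.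
    + unfold minus, plus, opp; simpl; ring.
Qed.

Lemma Cis_derive_RtoC (f : R -> R) x a :
  is_derive f x a -> Cis_derive (fun t => RtoC (f t)) x (RtoC a).
Proof.
  intro H. apply Cis_derive_components; simpl; [exact H|].
  apply (@is_derive_const R_AbsRing R_NormedModule).
Qed.

Lemma Cis_derive_Cmult_l (f : R -> C) x (a c : C) :
  Cis_derive f x a -> Cis_derive (fun t => (c * f t)%C) x (c * a)%C.
Proof.
  intro H. replace (c * a)%C with (0 * f x + c * a)%C by C_ring.
  apply (Cis_derive_mult (fun _ => c) f x 0%C a); [|exact H].
  apply (@is_derive_const R_AbsRing C_R_NormedModule).
Qed.

Lemma Cis_derive_lin (c : C) x : Cis_derive (fun t => (RtoC t * c)%C) x c.
Proof.
  apply (is_derive_ext (fun t => (c * RtoC t)%C)); [intro; C_ring|].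
  eapply is_derive_eq; [apply Cis_derive_Cmult_l, Cis_derive_RtoC, (@is_derive_id R_AbsRing)|].
  change (c * RtoC 1 = c)%C. ring.
Qed.

Lemma Cis_derive_Cexp (z : R -> C) x (z' : C) :
  Cis_derive z x z' -> Cis_derive (fun t => Cexp (z t)) x (Cexp (z x) * z')%C.
Proof.
  intros Hz.
  assert (H1 := Cis_derive_fst _ _ _ Hz). assert (H2 := Cis_derive_snd _ _ _ Hz).
  assert (E := is_derive_Rcomp exp (fun t => fst (z t)) x _ _ (is_derive_exp _) H1).
  assert (Co := is_derive_Rcomp cos (fun t => snd (z t)) x _ _ (is_derive_cos _) H2).
  assert (Si := is_derive_Rcomp sin (fun t => snd (z t)) x _ _ (is_derive_sin _) H2).
  apply Cis_derive_components; unfold Cexp; simpl;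
    (eapply is_derive_eq; [apply is_derive_Rmult; eassumption | simpl; ring]).
Qed.

Section Continuity.
Context {U : UniformSpace}.

Lemma Ccontinuous_fst (f : U -> C) x :
  Ccontinuous f x -> @continuous U R_UniformSpace (fun y => fst (f y)) x.
Proof.
  intro H. apply (continuous_comp f fst x H).
  apply (@continuous_fst R_UniformSpace R_UniformSpace).
Qed.

Lemma Ccontinuous_snd (f : U -> C) x :
  Ccontinuous f x -> @continuous U R_UniformSpace (fun y => snd (f y)) x.
Proof.
  intro H. apply (continuous_comp f snd x H).
  apply (@continuous_snd R_UniformSpace R_UniformSpace).
Qed.

Lemma Ccontinuous_components (f : U -> C) x :
  @continuous U R_UniformSpace (fun y => fst (f y)) x ->
  @continuous U R_UniformSpace (fun y => snd (f y)) x ->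
  Ccontinuous f x.
Proof.
  intros H1 H2.
  apply (continuous_ext (fun t => @plus C_R_NormedModule
          (@scal _ C_R_NormedModule (fst (f t)) (RtoC 1))
          (@scal _ C_R_NormedModule (snd (f t)) Ci))).
  { intro t; symmetry; apply C_R_decomp. }
  apply (@continuous_plus U R_AbsRing C_R_NormedModule);
  apply (@continuous_scal_l U R_AbsRing C_R_NormedModule); assumption.
Qed.

Lemma Ccontinuous_mult (f g : U -> C) x :
  Ccontinuous f x -> Ccontinuous g x -> Ccontinuous (fun y => (f y * g y)%C) x.
Proof.
  intros Hf Hg.
  assert (Hf1 := Ccontinuous_fst f x Hf). assert (Hf2 := Ccontinuous_snd f x Hf).
  assert (Hg1 := Ccontinuous_fst g x Hg). assert (Hg2 := Ccontinuous_snd g x Hg).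
  apply Ccontinuous_components; simpl.
  - apply (@continuous_minus U R_AbsRing R_NormedModule);
    apply (@continuous_mult U R_AbsRing); assumption.
  - apply (@continuous_plus U R_AbsRing R_NormedModule);
    apply (@continuous_mult U R_AbsRing); assumption.
Qed.

Lemma Ccontinuous_minus (f g : U -> C) x :
  Ccontinuous f x -> Ccontinuous g x -> Ccontinuous (fun y => (f y - g y)%C) x.
Proof. intros; apply (@continuous_minus U R_AbsRing C_R_NormedModule); assumption. Qed.

Lemma Ccontinuous_opp (f : U -> C) x :
  Ccontinuous f x -> Ccontinuous (fun y => (- f y)%C) x.
Proof. intros; apply (@continuous_opp U R_AbsRing C_R_NormedModule); assumption. Qed.

Lemma Ccontinuous_RtoC (g : U -> R) x :
  @continuous U R_UniformSpace g x -> Ccontinuous (fun y => RtoC (g y)) x.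
Proof. intro H. apply Ccontinuous_components; [exact H | apply continuous_const]. Qed.

Lemma Ccontinuous_Cexp (f : U -> C) x :
  Ccontinuous f x -> Ccontinuous (fun y => Cexp (f y)) x.
Proof.
  intro H. assert (H1 := Ccontinuous_fst f x H). assert (H2 := Ccontinuous_snd f x H).
  apply Ccontinuous_components; unfold Cexp; simpl;
    apply (@continuous_mult U R_AbsRing); apply continuous_comp; auto;
    (apply continuous_exp || apply continuous_cos || apply continuous_sin).
Qed.

End Continuity.

Lemma is_linear_Cmult (c : C) :
  @is_linear R_AbsRing C_R_NormedModule C_R_NormedModule (fun z => (c * z)%C).
Proof.
  split.
  - intros z w. change (c * (z + w) = c * z + c * w)%C. ring.
  - intros k z. rewrite !scal_C_R. C_ring.
  - exists (Cmod c + 1). split; [generalize (Cmod_ge_0 c); lra|].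
    intro z. rewrite (norm_C_R (c * z)%C), (norm_C_R z), Cmod_mult.
    generalize (Cmod_ge_0 z); intros; nra.
Qed.

Lemma Cis_RInt_Cmult_l (f : R -> C) a b (l c : C) :
  Cis_RInt f a b l -> Cis_RInt (fun t => (c * f t)%C) a b (c * l)%C.
Proof.
  intro H.
  assert (H1 := @is_RInt_fct_extend_fst R_NormedModule R_NormedModule f a b l H).
  assert (H2 := @is_RInt_fct_extend_snd R_NormedModule R_NormedModule f a b l H).
  replace (c * l)%C with (fst c * fst l - snd c * snd l, fst c * snd l + snd c * fst l)
    by (apply C_ext; simpl; ring).
  apply (@is_RInt_fct_extend_pair R_NormedModule R_NormedModule).
  - eapply is_RInt_ext; [|apply (@is_RInt_minus R_NormedModule);
                          apply (@is_RInt_scal R_NormedModule); [exact H1 | exact H2]].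
    intros x _. simpl. unfold scal, minus, plus, opp; simpl.
    unfold mult, plus, opp; simpl. ring.
  - eapply is_RInt_ext; [|apply (@is_RInt_plus R_NormedModule);
                          apply (@is_RInt_scal R_NormedModule); [exact H2 | exact H1]].
    intros x _. simpl. unfold scal, plus; simpl.
    unfold mult, plus; simpl. ring.
Qed.

Lemma Cis_RInt_unique (f : R -> C) a b (I J : C) :
  Cis_RInt f a b I -> Cis_RInt f a b J -> I = J.
Proof.
  intros HI HJ.
  rewrite <- (@is_RInt_unique C_R_CompleteNormedModule f a b I HI).
  exact (@is_RInt_unique C_R_CompleteNormedModule f a b J HJ).
Qed.

Lemma is_RInt_gen_linear (f g : R -> C) (L : C -> C) Fa Fb (l : C) :
  @is_linear R_AbsRing C_R_NormedModule C_R_NormedModule L ->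
  Filter Fa -> Filter Fb ->
  (forall a b z, Cis_RInt f a b z -> Cis_RInt g a b (L z)) ->
  @is_RInt_gen C_R_NormedModule f Fa Fb l ->
  @is_RInt_gen C_R_NormedModule g Fa Fb (L l).
Proof.
  intros HL FFa FFb Hfg H P HP.
  assert (Hc := @linear_cont R_AbsRing C_R_NormedModule C_R_NormedModule L l HL P HP).
  unfold filtermapi in *. eapply filter_imp; [|exact (H _ Hc)].
  intros ab [z [Hz Pz]]. exists (L z). split; auto.
Qed.

Lemma Cis_RInt_0_oo_Cmult_l (f : R -> C) (l c : C) :
  Cis_RInt_0_oo f l -> Cis_RInt_0_oo (fun t => (c * f t)%C) (c * l)%C.
Proof.
  apply (is_RInt_gen_linear f _ (fun z => (c * z)%C)); try exact _.
  - apply is_linear_Cmult.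
  - intros; apply Cis_RInt_Cmult_l; assumption.
Qed.

Lemma Cis_RInt_0_oo_unique (f : R -> C) (l1 l2 : C) :
  Cis_RInt_0_oo f l1 -> Cis_RInt_0_oo f l2 -> l1 = l2.
Proof.
  intros H1 H2.
  rewrite <- (@is_RInt_gen_unique C_R_CompleteNormedModule _ _
    (Proper_StrongProper _ (at_right_proper_filter 0))
    (Proper_StrongProper _ (Rbar_locally_filter p_infty)) f _ H1).
  exact (@is_RInt_gen_unique C_R_CompleteNormedModule _ _
    (Proper_StrongProper _ (at_right_proper_filter 0))
    (Proper_StrongProper _ (Rbar_locally_filter p_infty)) f _ H2).
Qed.

Lemma filter_prod_0_oo_pos :
  filter_prod (at_right 0) (Rbar_locally p_infty) (fun ab => 0 < fst ab /\ 0 < snd ab).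
Proof.
  apply Filter_prod with (fun a => 0 < a) (fun b => 0 < b).
  - exists (mkposreal 1 Rlt_0_1). intros; auto.
  - exists 0; auto.
  - intros; simpl; auto.
Qed.

Lemma at_right_0_lt_1 : at_right 0 (fun a => 0 < a < 1).
Proof.
  exists (mkposreal 1 Rlt_0_1). intros a Ha Ha0.
  change (Rabs (a - 0) < 1) in Ha. apply Rabs_def2 in Ha. simpl in Ha. lra.
Qed.

Lemma Rmin_pos_le (a b t : R) : 0 < a -> 0 < b -> Rmin a b <= t -> 0 < t.
Proof. intros Ha Hb Ht. apply Rlt_le_trans with (Rmin a b); [apply Rmin_glb_lt|]; auto. Qed.

Lemma Cis_RInt_0_oo_ext (f g : R -> C) (l : C) :
  (forall t, 0 < t -> f t = g t) -> Cis_RInt_0_oo f l -> Cis_RInt_0_oo g l.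
Proof.
  intros Hfg. apply (@is_RInt_gen_ext C_R_NormedModule); try exact _.
  eapply filter_imp; [|exact filter_prod_0_oo_pos].
  intros [a b] [Ha Hb] t Ht. apply Hfg, (Rmin_pos_le a b); [auto | auto | simpl in Ht; lra].
Qed.

Lemma Cis_RInt_0_oo_fold_sum (P : R -> C) (T : nat -> R -> C) (v : nat -> C) (l : list nat) :
  (forall n, In n l -> Cis_RInt_0_oo (fun t => (P t * T n t)%C) (v n)) ->
  Cis_RInt_0_oo (fun t => (P t * fold_right Cplus (RtoC 0) (map (fun n => T n t) l))%C)
    (fold_right Cplus (RtoC 0) (map v l)).
Proof.
  induction l as [|n l IH]; intro H; simpl.
  - apply (filterlimi_lim_ext (fun _ => RtoC 0)); [|apply filterlim_const].
    intros [a b]; simpl.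
    assert (H0 := @is_RInt_const C_R_NormedModule a b (RtoC 0)).
    rewrite scal_C_R, Cmult_0_r in H0.
    eapply is_RInt_ext; [|exact H0]. intros; symmetry; apply Cmult_0_r.
  - eapply (@is_RInt_gen_ext C_R_NormedModule); try exact _;
      [|exact (@is_RInt_gen_plus C_R_NormedModule _ _ _ _ _ _ _ _
                 (H n (or_introl eq_refl)) (IH (fun k Hk => H k (or_intror Hk))))].
    apply filter_forall. intros ab x _. rewrite plus_C_R. C_ring.
Qed.

Definition RInt_C (f : R -> C) (a b : R) : C :=
  (RInt (fun t => fst (f t)) a b, RInt (fun t => snd (f t)) a b).

Lemma Cis_RInt_RInt_C (f : R -> C) (a b : R) :
  (forall t, Rmin a b <= t <= Rmax a b -> Ccontinuous f t) ->
  Cis_RInt f a b (RInt_C f a b).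
Proof.
  intro H. apply (@is_RInt_fct_extend_pair R_NormedModule R_NormedModule);
    apply (@RInt_correct R_CompleteNormedModule), ex_RInt_continuous; intros.
  - apply (Ccontinuous_fst f); auto.
  - apply (Ccontinuous_snd f); auto.
Qed.

Lemma is_derive_RInt_param_pos (f df : R -> R -> R) (a b x : R) :
  0 < a <= b ->
  (forall u t, 0 < t -> is_derive (fun z => f z t) u (df u t)) ->
  (forall t, 0 < t -> @continuous (prod_UniformSpace R_UniformSpace R_UniformSpace)
                         R_UniformSpace (fun z => df (fst z) (snd z)) (x, t)) ->
  (forall u t, 0 < t -> @continuous R_UniformSpace R_UniformSpace (f u) t) ->
  is_derive (fun u => RInt (f u) a b) x (RInt (df x) a b).
Proof.
  intros Hab Hd Hc Hf.
  eapply is_derive_eq; [apply (is_derive_RInt_param f a b x)|].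
  - apply filter_forall. intros y t Ht. exists (df y t). apply Hd.
    rewrite Rmin_left in Ht by lra. lra.
  - intros t Ht. rewrite Rmin_left in Ht by lra.
    apply continuity_2d_pt_ext_loc with df.
    + assert (Ht2 : 0 < t / 2) by lra.
      exists (mkposreal _ Ht2). intros u v _ Hv. simpl in Hv.
      symmetry. apply is_derive_unique, Hd.
      apply Rabs_def2 in Hv. lra.
    + apply (continuity_2d_pt_filterlim df x t), Hc. lra.
  - apply filter_forall. intros y. apply (@ex_RInt_continuous R_CompleteNormedModule).
    intros z Hz. rewrite Rmin_left in Hz by lra. apply Hf. lra.
  - apply RInt_ext. intros t Ht. rewrite Rmin_left in Ht by lra.
    apply is_derive_unique, Hd. lra.
Qed.

Lemma Cis_derive_RInt_C_param (G dG : R -> R -> C) (a b x : R) :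
  0 < a <= b ->
  (forall u t, 0 < t -> Cis_derive (fun z => G z t) u (dG u t)) ->
  (forall t, 0 < t -> Ccontinuous (fun z : R * R => dG (fst z) (snd z)) (x, t)) ->
  (forall u t, 0 < t -> Ccontinuous (G u) t) ->
  Cis_derive (fun u => RInt_C (G u) a b) x (RInt_C (dG x) a b).
Proof.
  intros Hab Hd Hc Hf. unfold RInt_C.
  apply Cis_derive_components; simpl.
  - apply (is_derive_RInt_param_pos (fun u t => fst (G u t)) (fun u t => fst (dG u t))); auto.
    + intros; apply Cis_derive_fst; auto.
    + intros t Ht. apply (Ccontinuous_fst (fun z => dG (fst z) (snd z))); auto.
    + intros u t Ht. apply (Ccontinuous_fst (G u)); auto.
  - apply (is_derive_RInt_param_pos (fun u t => snd (G u t)) (fun u t => snd (dG u t))); auto.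
    + intros; apply Cis_derive_snd; auto.
    + intros t Ht. apply (Ccontinuous_snd (fun z => dG (fst z) (snd z))); auto.
    + intros u t Ht. apply (Ccontinuous_snd (G u)); auto.
Qed.

Lemma ln_le_sub_1 (t : R) : 0 < t -> ln t <= t - 1.
Proof. intro Ht. generalize (exp_ineq1_le (ln t)). rewrite exp_ln; lra. Qed.

Lemma ln_sub_lin_bounded (c b : R) : 0 < b ->
  exists M, forall t, 1 <= t -> c * ln t - b * t <= M.
Proof.
  intro Hb. set (c' := Rabs c + 1).
  assert (Hc' : 0 < c') by (unfold c'; generalize (Rabs_pos c); lra).
  exists (- c' - c' * ln (b / c')). intros t Ht.
  assert (Hlt : 0 <= ln t) by (rewrite <- ln_1; apply ln_le; lra).
  assert (H1 : c * ln t <= c' * ln t).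
  { unfold c'. apply Rmult_le_compat_r; auto. generalize (Rle_abs c); lra. }
  assert (Hd : 0 < b / c') by (apply Rdiv_lt_0_compat; auto).
  assert (H2 := ln_le_sub_1 (b / c' * t) ltac:(apply Rmult_lt_0_compat; lra)).
  rewrite ln_mult in H2 by lra.
  assert (H3 : c' * (ln (b / c') + ln t) <= c' * (b / c' * t - 1))
    by (apply Rmult_le_compat_l; lra).
  replace (c' * (b / c' * t - 1)) with (b * t - c') in H3 by (field; lra).
  lra.
Qed.

Lemma Rabs_sub_lt_2 (x y l e : R) : Rabs (x - l) < e -> Rabs (y - l) < e -> Rabs (x - y) < 2 * e.
Proof.
  intros Hx Hy. replace (x - y) with ((x - l) + - (y - l)) by ring.
  eapply Rle_lt_trans; [apply Rabs_triang|]. rewrite Rabs_Ropp. lra.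
Qed.

Lemma filterlim_squeeze_0 {T} (F : (T -> Prop) -> Prop) {FF : Filter F} (g h : T -> R) :
  F (fun t => 0 <= g t <= h t) -> filterlim h F (locally 0) -> filterlim g F (locally 0).
Proof.
  intros Hgh Hh. apply filterlim_locally. intro eps.
  apply filterlim_locally with (eps := eps) in Hh.
  generalize (filter_and _ _ Hgh Hh). apply filter_imp.
  intros x [H1 H2]. change (Rabs (g x - 0) < eps). change (Rabs (h x - 0) < eps) in H2.
  rewrite Rminus_0_r in *. rewrite Rabs_right in * by lra. lra.
Qed.

Lemma filterlim_scal_0 {T} (F : (T -> Prop) -> Prop) {FF : Filter F} (g : T -> R) (k : R) :
  filterlim g F (locally 0) -> filterlim (fun t => k * g t) F (locally 0).
Proof.
  intro H. replace 0 with (k * 0) by ring.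
  apply (filterlim_comp _ _ _ g (fun y => k * y) _ (locally 0)); auto.
  apply (continuous_mult (fun _ => k) (fun y => y) 0);
    [apply continuous_const | apply continuous_id].
Qed.

Lemma filterlim_exp_scal_ln_0 (c : R) : 0 < c ->
  filterlim (fun t => exp (c * ln t)) (at_right 0) (locally 0).
Proof.
  intro Hc. eapply filterlim_comp; [|exact is_lim_exp_m].
  intros P [M HM]. unfold filtermap.
  eapply filter_imp; [|apply (is_lim_ln_0 (fun y => y < M / c)); exists (M / c); auto].
  intros x Hx. apply HM.
  apply Rmult_lt_reg_l with (/ c); [apply Rinv_0_lt_compat; exact Hc|].
  replace (/ c * (c * ln x)) with (ln x) by (field; lra).
  replace (/ c * M) with (M / c) by (unfold Rdiv; ring). exact Hx.
Qed.

Lemma filterlim_exp_neg_lin (b : R) : 0 < b ->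
  filterlim (fun t => exp (- b * t)) (Rbar_locally p_infty) (locally 0).
Proof.
  intro Hb. eapply filterlim_comp; [|exact is_lim_exp_m].
  intros P [M HM]. exists (- M / b). intros x Hx. apply HM.
  apply Rmult_lt_compat_l with (r := b) in Hx; auto.
  replace (b * (- M / b)) with (- M) in Hx by (field; lra). lra.
Qed.

Lemma filterlim_exp_ln_sub_lin (c b : R) : 0 < b ->
  filterlim (fun t => exp (c * ln t - b * t)) (Rbar_locally p_infty) (locally 0).
Proof.
  intro Hb. destruct (ln_sub_lin_bounded c (b / 2)) as [M HM]; [lra|].
  apply (filterlim_squeeze_0 _ _ (fun t => exp M * exp (- (b / 2) * t))).
  - exists 1. intros t Ht. split; [left; apply exp_pos|].
    rewrite <- exp_plus. apply exp_le. specialize (HM t ltac:(lra)). lra.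
  - apply filterlim_scal_0; [exact _|]. apply (filterlim_exp_neg_lin (b / 2)). lra.
Qed.

Lemma filterlim_0_oo_add (g1 g2 : R -> R) :
  filterlim g1 (at_right 0) (locally 0) ->
  filterlim g2 (Rbar_locally p_infty) (locally 0) ->
  filterlim (fun ab : R * R => g1 (fst ab) + g2 (snd ab))
     (filter_prod (at_right 0) (Rbar_locally p_infty)) (locally 0).
Proof.
  intros H1 H2. apply filterlim_locally. intro eps.
  assert (He : 0 < eps / 2) by (generalize (cond_pos eps); lra).
  apply filterlim_locally with (eps := mkposreal _ He) in H1.
  apply filterlim_locally with (eps := mkposreal _ He) in H2.
  apply Filter_prod with (1 := H1) (2 := H2).
  intros a b Ha Hb. simpl.
  change (Rabs (g1 a - 0) < eps / 2) in Ha. change (Rabs (g2 b - 0) < eps / 2) in Hb.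
  change (Rabs (g1 a + g2 b - 0) < eps).
  rewrite Rminus_0_r in *. eapply Rle_lt_trans; [apply Rabs_triang | lra].
Qed.

Lemma filterlim_Cmod_0 {T} (F : (T -> Prop) -> Prop) {FF : Filter F} (g : T -> C) :
  filterlim (fun t => Cmod (g t)) F (locally 0) ->
  @filterlim _ C_R_NormedModule g F (locally (RtoC 0)).
Proof.
  intro H. apply filterlim_locally. intro eps.
  apply filterlim_locally with (eps := eps) in H.
  eapply filter_imp; [|exact H]. intros x Hx.
  change (Rabs (Cmod (g x) - 0) < eps) in Hx.
  apply (@norm_compat1 R_AbsRing C_R_NormedModule).
  rewrite norm_C_R, minus_C_R. replace (g x - RtoC 0)%C with (g x) by C_ring.
  rewrite Rminus_0_r, Rabs_right in Hx; [exact Hx | apply Rle_ge, Cmod_ge_0].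
Qed.

Lemma filterlim_0_oo_sub (B : R -> C) :
  @filterlim _ C_R_NormedModule B (at_right 0) (locally (RtoC 0)) ->
  @filterlim _ C_R_NormedModule B (Rbar_locally p_infty) (locally (RtoC 0)) ->
  @filterlim _ C_R_NormedModule (fun ab : R * R => (B (snd ab) - B (fst ab))%C)
     (filter_prod (at_right 0) (Rbar_locally p_infty)) (locally (RtoC 0)).
Proof.
  intros H0 Hi. apply filterlim_locally. intro eps.
  assert (He : 0 < eps / 4) by (generalize (cond_pos eps); lra).
  apply filterlim_locally with (eps := mkposreal _ He) in H0.
  apply filterlim_locally with (eps := mkposreal _ He) in Hi.
  apply Filter_prod with (1 := H0) (2 := Hi).
  intros a b Ha Hb. simpl.
  apply (@norm_compat1 R_AbsRing C_R_NormedModule).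
  rewrite norm_C_R, minus_C_R.
  replace (B b - B a - RtoC 0)%C with ((B b - RtoC 0) + - (B a - RtoC 0))%C by C_ring.
  eapply Rle_lt_trans; [apply Cmod_triangle|]. rewrite Cmod_opp.
  assert (Ha' := ball_C_R_Cmod _ _ _ Ha). assert (Hb' := ball_C_R_Cmod _ _ _ Hb).
  simpl in Ha', Hb'. lra.
Qed.

Lemma is_RInt_exp_scal_ln (c x y : R) : 0 < c -> 0 < x <= y ->
  is_RInt (fun t => exp ((c - 1) * ln t)) x y
    (/ c * exp (c * ln y) - / c * exp (c * ln x)).
Proof.
  intros Hc Hxy.
  apply (@is_RInt_derive R_CompleteNormedModule (fun t => / c * exp (c * ln t)));
    intros t Ht; rewrite Rmin_left, Rmax_right in Ht by lra.
  - auto_derive; [lra|].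
    replace ((c - 1) * ln t) with (c * ln t + - ln t) by ring.
    rewrite exp_plus, exp_Ropp, exp_ln by lra. field. lra.
  - apply continuous_exp_comp.
    apply (continuous_mult (fun _ => c - 1) ln t);
      [apply continuous_const | apply continuous_ln; lra].
Qed.

Lemma is_RInt_scal_exp_neg_lin (k b x y : R) : 0 < b ->
  is_RInt (fun t => k * exp (- b * t)) x y
    (- (k / b) * exp (- b * y) - - (k / b) * exp (- b * x)).
Proof.
  intro Hb.
  apply (@is_RInt_derive R_CompleteNormedModule (fun t => - (k / b) * exp (- b * t)));
    intros t _.
  - auto_derive; [auto | field; lra].
  - apply (continuous_mult (fun _ => k) (fun t => exp (- b * t)) t); [apply continuous_const|].
    apply continuous_exp_comp.
    apply (continuous_mult (fun _ => - b) (fun t => t) t);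
      [apply continuous_const | apply continuous_id].
Qed.

(** * Improper integrals by domination *)

Lemma ex_Cis_RInt_continuous_pos (f : R -> C) (a b : R) :
  (forall t, 0 < t -> Ccontinuous f t) -> 0 < a -> 0 < b ->
  exists I, Cis_RInt f a b I.
Proof.
  intros Hc Ha Hb. apply (@ex_RInt_continuous C_R_CompleteNormedModule).
  intros t Ht. apply Hc, (Rmin_pos_le a b); [auto | auto | apply Ht].
Qed.

Lemma Cmod_RInt_le_primitive (f : R -> C) (h H : R -> R) (D : R -> Prop) x y (I : C) :
  D x -> D y ->
  (forall t, Rmin x y <= t <= Rmax x y -> Cmod (f t) <= h t) ->
  (forall x y, D x -> D y -> x <= y -> is_RInt h x y (H y - H x)) ->
  Cis_RInt f x y I -> Cmod I <= Rabs (H y - H x).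
Proof.
  intros Dx Dy Hb Hh HI. destruct (Rle_dec x y) as [Hxy|Hxy].
  - rewrite <- norm_C_R.
    apply Rle_trans with (H y - H x); [|apply Rle_abs].
    apply (norm_RInt_le f h x y I (H y - H x) Hxy); auto.
    intros t Ht. rewrite norm_C_R. apply Hb. rewrite Rmin_left, Rmax_right; lra.
  - apply is_RInt_swap in HI.
    rewrite <- Cmod_opp, <- norm_C_R, Rabs_minus_sym.
    apply Rle_trans with (H x - H y); [|apply Rle_abs].
    apply (norm_RInt_le f h y x _ (H x - H y)); [lra| |exact HI|apply Hh; auto; lra].
    intros t Ht. rewrite norm_C_R. apply Hb. rewrite Rmin_right, Rmax_left; lra.
Qed.

Section Domination.

Variables (f : R -> C) (h1 h2 H1 H2 : R -> R) (L1 L2 : R).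
Hypothesis f_cont : forall t, 0 < t -> Ccontinuous f t.
Hypothesis f_le_h1 : forall t, 0 < t <= 1 -> Cmod (f t) <= h1 t.
Hypothesis f_le_h2 : forall t, 1 <= t -> Cmod (f t) <= h2 t.
Hypothesis H1_primitive :
  forall x y, 0 < x <= 1 -> 0 < y <= 1 -> x <= y -> is_RInt h1 x y (H1 y - H1 x).
Hypothesis H2_primitive :
  forall x y, 1 <= x -> 1 <= y -> x <= y -> is_RInt h2 x y (H2 y - H2 x).
Hypothesis H1_lim : filterlim H1 (at_right 0) (locally L1).
Hypothesis H2_lim : filterlim H2 (Rbar_locally p_infty) (locally L2).

Lemma Cmod_RInt_sub_le (a b a' b' : R) (I I' : C) :
  0 < a < 1 -> 0 < a' < 1 -> 1 < b -> 1 < b' ->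
  Cis_RInt f a b I -> Cis_RInt f a' b' I' ->
  Cmod (I' - I)%C <= Rabs (H1 a - H1 a') + Rabs (H2 b' - H2 b).
Proof.
  intros Ha Ha' Hb Hb' HI HI'.
  destruct (ex_Cis_RInt_continuous_pos f a' a) as [J1 HJ1]; try lra; auto.
  destruct (ex_Cis_RInt_continuous_pos f b b') as [J2 HJ2]; try lra; auto.
  assert (E : I' = (J1 + (I + J2))%C).
  { apply (Cis_RInt_unique f a' b'); [exact HI'|].
    exact (@is_RInt_Chasles C_R_NormedModule f a' a b' J1 _ HJ1
             (@is_RInt_Chasles C_R_NormedModule f a b b' I J2 HI HJ2)). }
  replace (I' - I)%C with (J1 + J2)%C by (rewrite E; C_ring).
  eapply Rle_trans; [apply Cmod_triangle|]. apply Rplus_le_compat.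
  - apply (Cmod_RInt_le_primitive f h1 H1 (fun t => 0 < t <= 1)); try lra; auto.
    intros t Ht. apply f_le_h1. split.
    + apply (Rmin_pos_le a' a); [lra | lra | apply Ht].
    + apply Rle_trans with (Rmax a' a); [apply Ht | apply Rmax_lub; lra].
  - apply (Cmod_RInt_le_primitive f h2 H2 (fun t => 1 <= t)); try lra; auto.
    intros t Ht. apply f_le_h2.
    apply Rle_trans with (Rmin b b'); [apply Rmin_glb; lra | apply Ht].
Qed.

Lemma filter_prod_near_ends (e : posreal) :
  filter_prod (at_right 0) (Rbar_locally p_infty)
    (fun ab => (0 < fst ab < 1 /\ Rabs (H1 (fst ab) - L1) < e) /\
               (1 < snd ab /\ Rabs (H2 (snd ab) - L2) < e)).
Proof.
  apply Filter_prod with (fun a => 0 < a < 1 /\ Rabs (H1 a - L1) < e)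
                         (fun b => 1 < b /\ Rabs (H2 b - L2) < e); [| |intros; simpl; tauto].
  - apply filter_and; [exact at_right_0_lt_1 | exact (proj1 (filterlim_locally H1 L1) H1_lim e)].
  - apply filter_and; [exists 1; auto | exact (proj1 (filterlim_locally H2 L2) H2_lim e)].
Qed.

Lemma ex_Cis_RInt_0_oo_dominated : exists l, Cis_RInt_0_oo f l.
Proof.
  assert (PF := @filter_prod_proper _ _ _ _ (at_right_proper_filter 0)
                  (Rbar_locally_filter p_infty)).
  assert (Hdef : filter_prod (at_right 0) (Rbar_locally p_infty)
    (fun ab => (exists y, Cis_RInt f (fst ab) (snd ab) y) /\
       (forall y1 y2, Cis_RInt f (fst ab) (snd ab) y1 ->
                      Cis_RInt f (fst ab) (snd ab) y2 -> y1 = y2))).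
  { eapply filter_imp; [|exact filter_prod_0_oo_pos].
    intros [a b] [Ha Hb]. split.
    - apply ex_Cis_RInt_continuous_pos; auto.
    - intros; eapply Cis_RInt_unique; eassumption. }
  destruct (proj1 (@filterlimi_locally_cauchy (R * R) C_R_CompleteNormedModule _ PF
     (fun ab y => Cis_RInt f (fst ab) (snd ab) y) Hdef)) as [l Hl]; [|exists l; exact Hl].
  intro eps. assert (He : 0 < eps / 4) by (generalize (cond_pos eps); lra).
  exists (fun ab => (0 < fst ab < 1 /\ Rabs (H1 (fst ab) - L1) < eps / 4) /\
               (1 < snd ab /\ Rabs (H2 (snd ab) - L2) < eps / 4)).
  split; [exact (filter_prod_near_ends (mkposreal _ He))|].
  intros [a b] [a' b'] [[Ha HA] [Hb HB]] [[Ha' HA'] [Hb' HB']] y y' Hy Hy'. simpl in *.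
  apply (@norm_compat1 R_AbsRing C_R_NormedModule). rewrite norm_C_R, minus_C_R.
  eapply Rle_lt_trans; [apply (Cmod_RInt_sub_le a b a' b'); eassumption|].
  generalize (Rabs_sub_lt_2 _ _ _ _ HA HA') (Rabs_sub_lt_2 _ _ _ _ HB' HB). lra.
Qed.

End Domination.

(** * The kernel [t^(s-1) e^(-mu t)] *)

Definition gamma_kernel (s mu : C) (t : R) : C :=
  Cexp ((s - 1) * RtoC (ln t) - mu * RtoC t)%C.

Lemma gamma_kernel_eq (s mu : C) (t : R) : 0 < t ->
  (Cpowc (RtoC t) (s - 1) * Cexp (- (mu * RtoC t)))%C = gamma_kernel s mu t.
Proof.
  intro Ht. rewrite Cpowc_RtoC by exact Ht. unfold gamma_kernel.
  rewrite <- Cexp_add. reflexivity.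
Qed.

Lemma gamma_kernel_succ (s mu : C) (t : R) : 0 < t ->
  gamma_kernel (s + 1) mu t = (gamma_kernel s mu t * RtoC t)%C.
Proof.
  intro Ht. unfold gamma_kernel.
  transitivity (Cexp ((s - 1) * RtoC (ln t) - mu * RtoC t) * Cexp (RtoC (ln t)))%C.
  - rewrite <- Cexp_add. f_equal. C_ring.
  - rewrite Cexp_RtoC, exp_ln by exact Ht. reflexivity.
Qed.

Lemma gamma_kernel_mul_pow (s mu : C) (t : R) (n : nat) : 0 < t ->
  (gamma_kernel s mu t * Cpow (RtoC t) n)%C = gamma_kernel (s + RtoC (INR n)) mu t.
Proof.
  intro Ht. induction n as [|n IH].
  - simpl. replace (s + RtoC 0)%C with s by C_ring. C_ring.
  - rewrite S_INR, RtoC_plus.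
    replace (s + (RtoC (INR n) + RtoC 1))%C with ((s + RtoC (INR n)) + 1)%C by C_ring.
    rewrite gamma_kernel_succ, <- IH by exact Ht. simpl. C_ring.
Qed.

Lemma Cmod_gamma_kernel (s mu : C) (t : R) :
  Cmod (gamma_kernel s mu t) = exp ((fst s - 1) * ln t - fst mu * t).
Proof. unfold gamma_kernel. rewrite Cmod_Cexp. f_equal. simpl. ring. Qed.

Lemma Cis_derive_gamma_kernel (s mu : C) (t : R) : 0 < t ->
  Cis_derive (gamma_kernel s mu) t (gamma_kernel s mu t * ((s - 1) * RtoC (/ t) - mu))%C.
Proof.
  intro Ht. unfold gamma_kernel. apply Cis_derive_Cexp.
  eapply is_derive_eq.
  - apply (@is_derive_minus R_AbsRing C_R_NormedModule);
      apply Cis_derive_Cmult_l, Cis_derive_RtoC;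
      [apply is_derive_ln; exact Ht | apply (@is_derive_id R_AbsRing)].
  - rewrite minus_C_R. change (@one R_AbsRing) with 1. C_ring.
Qed.

Lemma Ccontinuous_gamma_kernel (s mu : C) (t : R) : 0 < t ->
  Ccontinuous (gamma_kernel s mu) t.
Proof.
  intro Ht. apply (@ex_derive_continuous R_AbsRing C_R_NormedModule).
  eexists. apply Cis_derive_gamma_kernel, Ht.
Qed.

Lemma Cis_derive_gamma_kernel_succ (s mu : C) (t : R) : 0 < t ->
  Cis_derive (gamma_kernel (s + 1) mu) t
    (s * gamma_kernel s mu t - mu * gamma_kernel (s + 1) mu t)%C.
Proof.
  intro Ht. eapply is_derive_eq; [apply Cis_derive_gamma_kernel, Ht|].
  rewrite gamma_kernel_succ, RtoC_inv by lra.
  replace (s + 1 - 1)%C with s by C_ring.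
  C_field. C_neq_0.
Qed.

Lemma Ccontinuous_gamma_kernel_comb (a b s mu : C) (t : R) : 0 < t ->
  Ccontinuous (fun t => (a * gamma_kernel s mu t - b * gamma_kernel (s + 1) mu t)%C) t.
Proof.
  intro Ht. apply Ccontinuous_minus; apply Ccontinuous_mult;
    try apply continuous_const; apply Ccontinuous_gamma_kernel, Ht.
Qed.

Lemma ex_Cis_RInt_0_oo_gamma_kernel (s mu : C) : 0 < fst s -> 0 < fst mu ->
  exists l, Cis_RInt_0_oo (gamma_kernel s mu) l.
Proof.
  intros Hs Hm.
  destruct (ln_sub_lin_bounded (fst s - 1) (fst mu / 2)) as [M HM]; [lra|].
  apply (ex_Cis_RInt_0_oo_dominated (gamma_kernel s mu)
     (fun t => exp ((fst s - 1) * ln t))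
     (fun t => exp M * exp (- (fst mu / 2) * t))
     (fun t => / fst s * exp (fst s * ln t))
     (fun t => - (exp M / (fst mu / 2)) * exp (- (fst mu / 2) * t)) 0 0).
  - intros; apply Ccontinuous_gamma_kernel; assumption.
  - intros t Ht. rewrite Cmod_gamma_kernel. apply exp_le.
    assert (0 <= fst mu * t) by (apply Rmult_le_pos; lra). lra.
  - intros t Ht. rewrite Cmod_gamma_kernel, <- exp_plus. apply exp_le.
    specialize (HM t Ht). lra.
  - intros x y Hx _ Hxy. apply is_RInt_exp_scal_ln; lra.
  - intros x y _ _ _. apply is_RInt_scal_exp_neg_lin. lra.
  - apply filterlim_scal_0; [exact _|]. apply filterlim_exp_scal_ln_0, Hs.
  - apply filterlim_scal_0; [exact _|]. apply filterlim_exp_neg_lin. lra.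
Qed.

Lemma filterlim_gamma_kernel_0 (s mu : C) : 0 < fst s - 1 -> 0 <= fst mu ->
  @filterlim _ C_R_NormedModule (gamma_kernel s mu) (at_right 0) (locally (RtoC 0)).
Proof.
  intros Hs Hm. apply filterlim_Cmod_0; [exact _|].
  apply (filterlim_squeeze_0 _ _ (fun t => exp ((fst s - 1) * ln t))).
  - exists (mkposreal 1 Rlt_0_1). intros t _ Ht.
    rewrite Cmod_gamma_kernel. split; [left; apply exp_pos|]. apply exp_le.
    assert (0 <= fst mu * t) by (apply Rmult_le_pos; lra). lra.
  - apply filterlim_exp_scal_ln_0. exact Hs.
Qed.

Lemma filterlim_gamma_kernel_p_infty (s mu : C) : 0 < fst mu ->
  @filterlim _ C_R_NormedModule (gamma_kernel s mu) (Rbar_locally p_infty) (locally (RtoC 0)).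
Proof.
  intros Hm. apply filterlim_Cmod_0; [exact _|].
  apply (filterlim_ext (fun t => exp ((fst s - 1) * ln t - fst mu * t)));
    [intro t; rewrite Cmod_gamma_kernel; reflexivity|].
  apply filterlim_exp_ln_sub_lin. exact Hm.
Qed.

Lemma Cis_RInt_0_oo_gamma_kernel_succ (s mu : C) (l0 l1 : C) : 0 < fst s -> 0 < fst mu ->
  Cis_RInt_0_oo (gamma_kernel s mu) l0 -> Cis_RInt_0_oo (gamma_kernel (s + 1) mu) l1 ->
  (s * l0 = mu * l1)%C.
Proof.
  intros Hs Hm H0 H1.
  set (f := fun t => (s * gamma_kernel s mu t - mu * gamma_kernel (s + 1) mu t)%C).
  assert (Hf : Cis_RInt_0_oo f (s * l0 - mu * l1)%C).
  { apply (@is_RInt_gen_minus C_R_NormedModule); try exact _;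
      apply Cis_RInt_0_oo_Cmult_l; assumption. }
  assert (Hf0 : Cis_RInt_0_oo f (RtoC 0)).
  { apply (filterlimi_lim_ext_loc
      (fun ab : R * R => (gamma_kernel (s + 1) mu (snd ab) - gamma_kernel (s + 1) mu (fst ab))%C)).
    - eapply filter_imp; [|exact filter_prod_0_oo_pos]. intros [a b] [Ha Hb]. simpl.
      apply (@is_RInt_derive C_R_CompleteNormedModule (gamma_kernel (s + 1) mu) f);
        intros t Ht; assert (0 < t) by (apply (Rmin_pos_le a b); auto; apply Ht).
      + apply Cis_derive_gamma_kernel_succ; assumption.
      + apply Ccontinuous_gamma_kernel_comb; assumption.
    - apply filterlim_0_oo_sub.
      + apply filterlim_gamma_kernel_0; simpl; lra.
      + apply filterlim_gamma_kernel_p_infty; exact Hm. }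
  assert (E := Cis_RInt_0_oo_unique f _ _ Hf Hf0).
  transitivity ((s * l0 - mu * l1) + mu * l1)%C; [C_ring|]. rewrite E. C_ring.
Qed.

(** * Rotating [mu] to [1]: the value [Gamma(s) / mu^s] *)

Lemma filterlimi_Cmod_le_0 {T} (F : (T -> Prop) -> Prop) {PF : ProperFilter F}
  (P : T -> C -> Prop) (K : T -> R) (l : C) :
  filterlimi P F (@locally C_R_NormedModule l) -> filterlim K F (locally 0) ->
  F (fun x => forall z, P x z -> Cmod z <= K x) -> l = RtoC 0.
Proof.
  intros HP HK HB. apply Cmod_eq_0.
  destruct (Rle_lt_dec (Cmod l) 0) as [H|H]; [generalize (Cmod_ge_0 l); lra|].
  exfalso.
  assert (He : 0 < Cmod l / 4) by lra. set (e := mkposreal _ He).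
  apply (proj1 (@filterlimi_locally T C_R_NormedModule F _ P l)) with (eps := e) in HP.
  apply filterlim_locally with (eps := e) in HK.
  destruct (filter_ex _ (filter_and _ _ HP (filter_and _ _ HK HB)))
    as [x [[z [Pz Bz]] [Kx Bx]]].
  assert (H1 := ball_C_R_Cmod _ _ _ Bz). specialize (Bx z Pz).
  change (Rabs (K x - 0) < e) in Kx. rewrite Rminus_0_r in Kx.
  apply Rabs_def2 in Kx. simpl in H1, Kx.
  assert (Cmod l <= Cmod z + Cmod (z - l)%C).
  { replace l with (z + - (z - l))%C at 1 by C_ring.
    eapply Rle_trans; [apply Cmod_triangle|]. rewrite Cmod_opp. lra. }
  lra.
Qed.

Lemma Cis_RInt_0_oo_CGamma (s : C) : 0 < fst s ->
  Cis_RInt_0_oo (gamma_kernel s (RtoC 1)) (CGamma s).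
Proof.
  intro Hs. destruct (ex_Cis_RInt_0_oo_gamma_kernel s (RtoC 1) Hs) as [l Hl]; [simpl; lra|].
  replace (CGamma s) with l; [exact Hl|]. symmetry. unfold CGamma.
  apply (@is_RInt_gen_unique C_R_CompleteNormedModule _ _
    (Proper_StrongProper _ (at_right_proper_filter 0))
    (Proper_StrongProper _ (Rbar_locally_filter p_infty))).
  apply (Cis_RInt_0_oo_ext (gamma_kernel s (RtoC 1))); [|exact Hl].
  intros t Ht. rewrite <- gamma_kernel_eq, <- Cexp_RtoC by exact Ht.
  replace (- (RtoC 1 * RtoC t))%C with (RtoC (- t)) by (apply C_ext; simpl; ring).
  reflexivity.
Qed.

Section Rotation.

Variables s mu : C.
Hypothesis s_pos : 0 < fst s.
Hypothesis mu_pos : 0 < fst mu.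

Definition mu_pow (u : R) : C := Cexp (RtoC u * CLog mu)%C.

Lemma mu_pow_0 : mu_pow 0 = RtoC 1.
Proof.
  unfold mu_pow. replace (RtoC 0 * CLog mu)%C with (RtoC 0) by C_ring.
  rewrite Cexp_RtoC, exp_0. reflexivity.
Qed.

Lemma mu_pow_1 : mu_pow 1 = mu.
Proof. unfold mu_pow. rewrite Cmult_1_l. apply Cexp_CLog, mu_pos. Qed.

Lemma Cis_derive_mu_pow (u : R) : Cis_derive mu_pow u (CLog mu * mu_pow u)%C.
Proof.
  eapply is_derive_eq; [apply Cis_derive_Cexp, Cis_derive_lin|].
  unfold mu_pow. C_ring.
Qed.

Lemma Ccontinuous_mu_pow (u : R) : Ccontinuous mu_pow u.
Proof.
  apply (@ex_derive_continuous R_AbsRing C_R_NormedModule).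
  eexists. apply Cis_derive_mu_pow.
Qed.

Lemma Ccontinuous_mu_pow_fst (x t : R) : Ccontinuous (fun z : R * R => mu_pow (fst z)) (x, t).
Proof.
  apply (continuous_comp (@fst R R) mu_pow);
    [apply (@continuous_fst R_UniformSpace R_UniformSpace) | apply Ccontinuous_mu_pow].
Qed.

(* [Re mu^u = e^(u x) cos(u y)] with [x + i y = Log mu] and [|y| < PI/2]. *)
Definition mu_pow_re_min : R := exp (- Rabs (fst (CLog mu))) * cos (Rabs (snd (CLog mu))).

Lemma Rabs_arg_mu_lt : Rabs (snd (CLog mu)) < PI / 2.
Proof.
  unfold CLog. simpl. rewrite Carg_pos by exact mu_pos.
  generalize (atan_bound (snd mu / fst mu)). unfold Rabs; destruct Rcase_abs; lra.
Qed.

Lemma mu_pow_re_min_pos : 0 < mu_pow_re_min.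
Proof.
  apply Rmult_lt_0_compat; [apply exp_pos|].
  generalize Rabs_arg_mu_lt (Rabs_pos (snd (CLog mu))); intros.
  apply cos_gt_0; lra.
Qed.

Lemma mu_pow_re (u : R) : fst (mu_pow u) = exp (u * fst (CLog mu)) * cos (u * snd (CLog mu)).
Proof. unfold mu_pow, Cexp. simpl. f_equal; f_equal; ring. Qed.

Lemma mu_pow_re_ge (u : R) : 0 <= u <= 1 -> mu_pow_re_min <= fst (mu_pow u).
Proof.
  intro Hu. rewrite mu_pow_re. unfold mu_pow_re_min.
  assert (Hy := Rabs_arg_mu_lt). set (y := snd (CLog mu)) in *. set (x := fst (CLog mu)).
  assert (Hy0 := Rabs_pos y).
  assert (Hc : cos (Rabs y) <= cos (u * y)).
  { replace (cos (u * y)) with (cos (u * Rabs y)).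
    2:{ unfold Rabs; destruct Rcase_abs; [rewrite <- cos_neg; f_equal; ring | reflexivity]. }
    assert (PI / 2 < PI) by (generalize PI_RGT_0; lra).
    destruct (Req_dec (u * Rabs y) (Rabs y)) as [E|E]; [rewrite E; lra|].
    left. apply cos_decreasing_1; nra. }
  apply Rmult_le_compat; [left; apply exp_pos | left; apply cos_gt_0; lra | | exact Hc].
  apply exp_le. unfold Rabs; destruct Rcase_abs; nra.
Qed.

Lemma Ccontinuous_gamma_kernel_mu_pow (a : C) (t u : R) :
  Ccontinuous (fun v => gamma_kernel a (mu_pow v) t) u.
Proof.
  unfold gamma_kernel. apply Ccontinuous_Cexp, Ccontinuous_minus; [apply continuous_const|].
  apply Ccontinuous_mult; [apply Ccontinuous_mu_pow | apply continuous_const].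
Qed.

Definition rotated_kernel_deriv (u t : R) : C :=
  (gamma_kernel s (mu_pow u) t * - (CLog mu * mu_pow u * RtoC t))%C.

Lemma Cis_derive_rotated_kernel (u t : R) :
  Cis_derive (fun v => gamma_kernel s (mu_pow v) t) u (rotated_kernel_deriv u t).
Proof.
  unfold gamma_kernel, rotated_kernel_deriv. apply Cis_derive_Cexp.
  eapply is_derive_eq.
  - apply (@is_derive_minus R_AbsRing C_R_NormedModule);
      [apply (@is_derive_const R_AbsRing C_R_NormedModule)|].
    apply (is_derive_ext (fun v => (RtoC t * mu_pow v)%C)); [intro; C_ring|].
    apply Cis_derive_Cmult_l, Cis_derive_mu_pow.
  - rewrite minus_C_R. change (@zero C_R_NormedModule) with (RtoC 0). C_ring.
Qed.

Lemma Ccontinuous_rotated_kernel (a : C) (x t : R) : 0 < t ->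
  Ccontinuous (fun z : R * R => gamma_kernel a (mu_pow (fst z)) (snd z)) (x, t).
Proof.
  intro Ht. unfold gamma_kernel.
  apply Ccontinuous_Cexp, Ccontinuous_minus; apply Ccontinuous_mult.
  - apply continuous_const.
  - apply Ccontinuous_RtoC, (continuous_comp (@snd R R) ln);
      [apply (@continuous_snd R_UniformSpace R_UniformSpace) | apply continuous_ln, Ht].
  - apply Ccontinuous_mu_pow_fst.
  - apply Ccontinuous_RtoC, (@continuous_snd R_UniformSpace R_UniformSpace).
Qed.

Lemma Ccontinuous_rotated_kernel_deriv (x t : R) : 0 < t ->
  Ccontinuous (fun z : R * R => rotated_kernel_deriv (fst z) (snd z)) (x, t).
Proof.
  intro Ht. unfold rotated_kernel_deriv.
  apply Ccontinuous_mult; [apply Ccontinuous_rotated_kernel, Ht|].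
  apply Ccontinuous_opp, Ccontinuous_mult; [apply Ccontinuous_mult|].
  - apply continuous_const.
  - apply Ccontinuous_mu_pow_fst.
  - apply Ccontinuous_RtoC, (@continuous_snd R_UniformSpace R_UniformSpace).
Qed.

Definition rotated_RInt (a b u : R) : C := RInt_C (gamma_kernel s (mu_pow u)) a b.

Definition rotated_boundary (a b u : R) : C :=
  (gamma_kernel (s + 1) (mu_pow u) b - gamma_kernel (s + 1) (mu_pow u) a)%C.

Lemma Cis_RInt_rotated_RInt (a b u : R) : 0 < a <= b ->
  Cis_RInt (gamma_kernel s (mu_pow u)) a b (rotated_RInt a b u).
Proof.
  intro Hab. apply Cis_RInt_RInt_C. intros t Ht. rewrite Rmin_left in Ht by lra.
  apply Ccontinuous_gamma_kernel. lra.
Qed.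

(* Integration by parts in [t], as in [Cis_RInt_0_oo_gamma_kernel_succ]. *)
Lemma Cis_RInt_rotated_kernel_deriv (a b u : R) : 0 < a <= b ->
  Cis_RInt (rotated_kernel_deriv u) a b
    (- CLog mu * (s * rotated_RInt a b u - rotated_boundary a b u))%C.
Proof.
  intro Hab. set (v := mu_pow u).
  assert (Hbd : Cis_RInt (fun t => (s * gamma_kernel s v t - v * gamma_kernel (s + 1) v t)%C)
                  a b (rotated_boundary a b u)).
  { apply (@is_RInt_derive C_R_CompleteNormedModule (gamma_kernel (s + 1) v));
      intros t Ht; rewrite Rmin_left in Ht by lra.
    - apply Cis_derive_gamma_kernel_succ. lra.
    - apply Ccontinuous_gamma_kernel_comb. lra. }
  apply Cis_RInt_Cmult_l with (c := (- CLog mu)%C) in Hbd.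
  assert (HI := Cis_RInt_Cmult_l _ _ _ _ (- CLog mu * s)%C (Cis_RInt_rotated_RInt a b u Hab)).
  assert (HD := @is_RInt_minus C_R_NormedModule _ _ _ _ _ _ HI Hbd).
  replace (- CLog mu * (s * rotated_RInt a b u - rotated_boundary a b u))%C
    with (- CLog mu * s * rotated_RInt a b u - - CLog mu * rotated_boundary a b u)%C
    by C_ring.
  eapply is_RInt_ext; [|exact HD].
  intros t Ht. rewrite Rmin_left, Rmax_right in Ht by lra.
  unfold rotated_kernel_deriv. fold v. rewrite minus_C_R, gamma_kernel_succ by lra. C_ring.
Qed.

Lemma Cis_derive_rotated_RInt (a b u : R) : 0 < a <= b ->
  Cis_derive (rotated_RInt a b) u
    (- CLog mu * (s * rotated_RInt a b u - rotated_boundary a b u))%C.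
Proof.
  intro Hab.
  replace (- CLog mu * (s * rotated_RInt a b u - rotated_boundary a b u))%C
    with (RInt_C (rotated_kernel_deriv u) a b).
  - apply Cis_derive_RInt_C_param; try lra.
    + intros; apply Cis_derive_rotated_kernel.
    + intros; apply Ccontinuous_rotated_kernel_deriv; assumption.
    + intros; apply Ccontinuous_gamma_kernel; assumption.
  - apply (Cis_RInt_unique (rotated_kernel_deriv u) a b);
      [|apply Cis_RInt_rotated_kernel_deriv, Hab].
    apply Cis_RInt_RInt_C. intros t Ht. rewrite Rmin_left in Ht by lra.
    unfold rotated_kernel_deriv.
    apply Ccontinuous_mult; [apply Ccontinuous_gamma_kernel; lra|].
    apply Ccontinuous_opp, Ccontinuous_mult;
      [apply continuous_const | apply Ccontinuous_RtoC, continuous_id].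
Qed.

Definition rotated (a b u : R) : C := (Cexp (RtoC u * (s * CLog mu)) * rotated_RInt a b u)%C.

Definition rotated_deriv (a b u : R) : C :=
  (Cexp (RtoC u * (s * CLog mu)) * CLog mu * rotated_boundary a b u)%C.

Lemma Cis_RInt_rotated_deriv (a b : R) : 0 < a <= b ->
  Cis_RInt (rotated_deriv a b) 0 1 (rotated a b 1 - rotated a b 0)%C.
Proof.
  intro Hab. apply (@is_RInt_derive C_R_CompleteNormedModule (rotated a b)); intros u _.
  - eapply is_derive_eq.
    + apply Cis_derive_mult; [apply Cis_derive_Cexp, Cis_derive_lin|].
      apply Cis_derive_rotated_RInt, Hab.
    + unfold rotated_deriv. C_ring.
  - unfold rotated_deriv, rotated_boundary.
    apply Ccontinuous_mult; [apply Ccontinuous_mult; [|apply continuous_const]|].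
    + apply Ccontinuous_Cexp, Ccontinuous_mult;
        [apply Ccontinuous_RtoC, continuous_id | apply continuous_const].
    + apply Ccontinuous_minus; apply Ccontinuous_gamma_kernel_mu_pow.
Qed.

Definition rotated_bound (a b : R) : R :=
  exp (Rabs (fst (s * CLog mu)%C)) * Cmod (CLog mu) *
  (exp (fst s * ln a) + exp (fst s * ln b - mu_pow_re_min * b)).

Lemma Cmod_gamma_kernel_succ_mu_pow (t u : R) : 0 < t -> 0 <= u <= 1 ->
  Cmod (gamma_kernel (s + 1) (mu_pow u) t) <= exp (fst s * ln t - mu_pow_re_min * t).
Proof.
  intros Ht Hu. rewrite Cmod_gamma_kernel. apply exp_le.
  assert (H := mu_pow_re_ge u Hu).
  replace (fst (s + 1)%C - 1) with (fst s) by (simpl; ring).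
  assert (mu_pow_re_min * t <= fst (mu_pow u) * t) by (apply Rmult_le_compat_r; lra). lra.
Qed.

Lemma Cmod_rotated_deriv_le (a b u : R) : 0 < a <= b -> 0 <= u <= 1 ->
  Cmod (rotated_deriv a b u) <= rotated_bound a b.
Proof.
  intros Hab Hu. unfold rotated_deriv, rotated_bound, rotated_boundary. rewrite !Cmod_mult.
  apply Rmult_le_compat; try apply Rmult_le_pos; try apply Cmod_ge_0.
  - apply Rmult_le_compat_r; [apply Cmod_ge_0|].
    rewrite Cmod_Cexp. apply exp_le.
    replace (fst (RtoC u * (s * CLog mu))%C) with (u * fst (s * CLog mu)%C) by (simpl; ring).
    unfold Rabs; destruct Rcase_abs; nra.
  - unfold Cminus. eapply Rle_trans; [apply Cmod_triangle|]. rewrite Cmod_opp, Rplus_comm.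
    apply Rplus_le_compat; [|apply Cmod_gamma_kernel_succ_mu_pow; lra].
    eapply Rle_trans; [apply Cmod_gamma_kernel_succ_mu_pow; lra|]. apply exp_le.
    assert (0 <= mu_pow_re_min * a) by (apply Rmult_le_pos; [apply Rlt_le, mu_pow_re_min_pos | lra]).
    lra.
Qed.

Lemma Cmod_rotated_sub_le (a b : R) : 0 < a <= b ->
  Cmod (rotated a b 1 - rotated a b 0)%C <= rotated_bound a b.
Proof.
  intro Hab. rewrite <- norm_C_R.
  replace (rotated_bound a b) with ((1 - 0) * rotated_bound a b) by ring.
  apply (norm_RInt_le_const (rotated_deriv a b) 0 1); [lra| |apply Cis_RInt_rotated_deriv, Hab].
  intros u Hu. rewrite norm_C_R. apply Cmod_rotated_deriv_le; assumption.
Qed.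

Lemma filterlim_rotated_bound :
  filterlim (fun ab : R * R => rotated_bound (fst ab) (snd ab))
     (filter_prod (at_right 0) (Rbar_locally p_infty)) (locally 0).
Proof.
  unfold rotated_bound. apply filterlim_scal_0; [exact _|].
  apply (filterlim_0_oo_add (fun a => exp (fst s * ln a))
                            (fun b => exp (fst s * ln b - mu_pow_re_min * b))).
  - apply filterlim_exp_scal_ln_0, s_pos.
  - apply filterlim_exp_ln_sub_lin, mu_pow_re_min_pos.
Qed.

Lemma rotated_1 (a b : R) : 0 < a <= b -> forall I, Cis_RInt (gamma_kernel s mu) a b I ->
  rotated a b 1 = (Cpowc mu s * I)%C.
Proof.
  intros Hab I HI. unfold rotated. rewrite Cmult_1_l, Cpowc_re_pos by exact mu_pos.
  f_equal.
  apply (Cis_RInt_unique (gamma_kernel s mu) a b); [|exact HI].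
  rewrite <- mu_pow_1 at 1. apply Cis_RInt_rotated_RInt, Hab.
Qed.

Lemma rotated_0 (a b : R) : 0 < a <= b -> forall I, Cis_RInt (gamma_kernel s (RtoC 1)) a b I ->
  rotated a b 0 = I.
Proof.
  intros Hab I HI. unfold rotated.
  replace (RtoC 0 * (s * CLog mu))%C with (RtoC 0) by C_ring.
  rewrite Cexp_RtoC, exp_0, Cmult_1_l.
  apply (Cis_RInt_unique (gamma_kernel s (RtoC 1)) a b); [|exact HI].
  rewrite <- mu_pow_0. apply Cis_RInt_rotated_RInt, Hab.
Qed.

Lemma Cmod_RInt_rotation_diff_le (a b : R) (z : C) : 0 < a <= b ->
  Cis_RInt (fun t => Cpowc mu s * gamma_kernel s mu t - gamma_kernel s (RtoC 1) t)%C a b z ->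
  Cmod z <= rotated_bound a b.
Proof.
  intros Hab Hz.
  destruct (ex_Cis_RInt_continuous_pos (gamma_kernel s mu) a b) as [I1 HI1];
    try lra; [intros; apply Ccontinuous_gamma_kernel; assumption|].
  destruct (ex_Cis_RInt_continuous_pos (gamma_kernel s (RtoC 1)) a b) as [I0 HI0];
    try lra; [intros; apply Ccontinuous_gamma_kernel; assumption|].
  replace z with (rotated a b 1 - rotated a b 0)%C; [apply Cmod_rotated_sub_le, Hab|].
  rewrite (rotated_1 a b Hab I1 HI1), (rotated_0 a b Hab I0 HI0).
  apply (Cis_RInt_unique
    (fun t => Cpowc mu s * gamma_kernel s mu t - gamma_kernel s (RtoC 1) t)%C a b); [|exact Hz].
  apply (@is_RInt_minus C_R_NormedModule); [apply Cis_RInt_Cmult_l|]; assumption.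
Qed.

Theorem Cis_RInt_0_oo_gamma_kernel :
  Cis_RInt_0_oo (gamma_kernel s mu) (CGamma s / Cpowc mu s)%C.
Proof.
  destruct (ex_Cis_RInt_0_oo_gamma_kernel s mu s_pos mu_pos) as [L HL]. change C in L.
  assert (Hpow : Cpowc mu s <> RtoC 0) by (rewrite Cpowc_re_pos by exact mu_pos; apply Cexp_neq_0).
  assert (Hdiff : Cis_RInt_0_oo
      (fun t => Cpowc mu s * gamma_kernel s mu t - gamma_kernel s (RtoC 1) t)%C
      (Cpowc mu s * L - CGamma s)%C).
  { apply (@is_RInt_gen_minus C_R_NormedModule); try exact _;
      [apply Cis_RInt_0_oo_Cmult_l, HL | apply Cis_RInt_0_oo_CGamma, s_pos]. }
  assert (Z : (Cpowc mu s * L - CGamma s)%C = RtoC 0).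
  { apply (filterlimi_Cmod_le_0 _ _ (fun ab => rotated_bound (fst ab) (snd ab)) _ Hdiff
             filterlim_rotated_bound).
    apply Filter_prod with (fun a => 0 < a < 1) (fun b => 1 < b);
      [exact at_right_0_lt_1 | exists 1; auto |].
    intros a b Ha Hb z Hz. apply Cmod_RInt_rotation_diff_le; [simpl; lra | exact Hz]. }
  replace (CGamma s / Cpowc mu s)%C with L; [exact HL|].
  replace (CGamma s) with (Cpowc mu s * L)%C.
  - C_field. exact Hpow.
  - transitivity (Cpowc mu s * L - (Cpowc mu s * L - CGamma s))%C; [rewrite Z|]; C_ring.
Qed.

End Rotation.

(** * A terminating Watson-type summation *)

Definition Csum (f : nat -> C) (n : nat) : C := fold_right Cplus (RtoC 0) (map f (seq 0 n)).

Lemma fold_right_Cplus_acc (l : list C) (x : C) :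
  fold_right Cplus x l = (fold_right Cplus (RtoC 0) l + x)%C.
Proof. induction l as [|y l IH]; simpl; [|rewrite IH]; C_ring. Qed.

Lemma Csum_S (f : nat -> C) (n : nat) : Csum f (S n) = (Csum f n + f n)%C.
Proof.
  unfold Csum. rewrite seq_S, map_app, fold_right_app. simpl.
  rewrite fold_right_Cplus_acc. f_equal. C_ring.
Qed.

Lemma Csum_sub_scal (f g : nat -> C) (r : C) (n : nat) :
  Csum (fun k => f k - r * g k)%C n = (Csum f n - r * Csum g n)%C.
Proof.
  induction n as [|n IH]; [unfold Csum; simpl; C_ring|].
  rewrite !Csum_S, IH. C_ring.
Qed.

Lemma Csum_scal (r : C) (f : nat -> C) (n : nat) :
  Csum (fun k => r * f k)%C n = (r * Csum f n)%C.
Proof.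
  induction n as [|n IH]; [unfold Csum; simpl; C_ring|].
  rewrite !Csum_S, IH. C_ring.
Qed.

Lemma poch_neq_0 (a : C) (n : nat) :
  (forall j, (j < n)%nat -> (a + RtoC (INR j))%C <> RtoC 0) -> poch a n <> RtoC 0.
Proof.
  induction n as [|n IH]; intro H; cbn [poch].
  - C_neq_0.
  - apply Cmult_neq_0; [apply IH; intros; apply H|apply H]; lia.
Qed.

Lemma poch_pred (a : C) (n : nat) :
  (poch (a - 1) n * (a - 1 + RtoC (INR n)) = (a - 1) * poch a n)%C.
Proof.
  induction n as [|n IH]; cbn [poch]; [simpl; C_ring|].
  rewrite S_INR, RtoC_plus.
  transitivity (poch (a - 1) n * (a - 1 + RtoC (INR n)) * (a + RtoC (INR n)))%C; [C_ring|].
  rewrite IH. C_ring.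
Qed.

Lemma poch_pred_eq (a : C) (n : nat) : (a - 1 + RtoC (INR n))%C <> RtoC 0 ->
  poch (a - 1) n = ((a - 1) * poch a n / (a - 1 + RtoC (INR n)))%C.
Proof. intro H. rewrite <- poch_pred. C_field. exact H. Qed.

Lemma RtoC_fact_neq_0 (n : nat) : RtoC (INR (fact n)) <> RtoC 0.
Proof. apply C_neq_0_of_fst, INR_fact_neq_0. Qed.

Lemma RtoC_fact_S (n : nat) :
  RtoC (INR (fact (S n))) = (RtoC (INR (fact n)) * (RtoC (INR n) + 1))%C.
Proof.
  change (fact (S n)) with (S n * fact n)%nat.
  rewrite mult_INR, S_INR, RtoC_mult, RtoC_plus. C_ring.
Qed.

Section Watson.

Variables a b : C.
Let c := ((1 + a + b) / 2)%C.
Hypothesis c_not_npos : forall k : nat, c <> RtoC (- INR k).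

Lemma c_add_neq_0 (k : nat) : (c + RtoC (INR k))%C <> RtoC 0.
Proof.
  intro E. apply (c_not_npos k). rewrite RtoC_opp.
  transitivity ((c + RtoC (INR k)) - RtoC (INR k))%C; [C_ring|]. rewrite E. C_ring.
Qed.

Lemma poch_c_neq_0 (n : nat) : poch c n <> RtoC 0.
Proof. apply poch_neq_0. intros; apply c_add_neq_0. Qed.

Lemma poch_neg_2m_neq_0 (m n : nat) : (n <= 2 * m)%nat -> poch (RtoC (- (2 * INR m))) n <> RtoC 0.
Proof.
  intro H. apply poch_neq_0. intros j Hj.
  assert (Hj' : (j < 2 * m)%nat) by lia. apply lt_INR in Hj'. rewrite mult_INR in Hj'.
  change (INR 2) with 2 in Hj'. C_neq_0.
Qed.

Definition watson_term (m n : nat) : C :=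
  (poch (RtoC (- INR m)) n * poch a n /
   (poch (RtoC (- (2 * INR m))) n * poch c n) * poch b n / RtoC (INR (fact n)))%C.

Definition watson_value (m : nat) : C :=
  (poch ((1 + a) / 2) m * poch ((1 + b) / 2) m / (poch (/ 2) m * poch c m))%C.

Definition watson_ratio (m : nat) : C :=
  (((1 + a) / 2 + RtoC (INR m)) * ((1 + b) / 2 + RtoC (INR m))
   / ((/ 2 + RtoC (INR m)) * (c + RtoC (INR m))))%C.

Lemma watson_term_0 (m : nat) : watson_term m 0 = RtoC 1.
Proof.
  unfold watson_term. cbn [poch fact]. change (INR 1) with 1.
  C_field; repeat split; C_neq_0.
Qed.

Lemma watson_term_succ_n (m k : nat) : (k < 2 * m)%nat ->
  watson_term m (S k) = (watson_term m k *
    ((RtoC (INR k) - RtoC (INR m)) * (a + RtoC (INR k)) * (b + RtoC (INR k))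
     / ((RtoC (INR k) - 2 * RtoC (INR m)) * (c + RtoC (INR k)) * (RtoC (INR k) + 1))))%C.
Proof.
  intro Hk. unfold watson_term. cbn [poch]. rewrite RtoC_fact_S.
  assert (N1 := poch_neg_2m_neq_0 m k ltac:(lia)).
  assert (N2 := poch_c_neq_0 k).
  assert (N3 := RtoC_fact_neq_0 k).
  assert (N4 := c_add_neq_0 k).
  apply lt_INR in Hk. rewrite mult_INR in Hk. assert (Hk0 := pos_INR k).
  replace (RtoC (- (2 * INR m))) with (- (2 * RtoC (INR m)))%C in *
    by (rewrite RtoC_opp, RtoC_mult; reflexivity).
  replace (RtoC (- INR m)) with (- RtoC (INR m))%C in * by (rewrite RtoC_opp; reflexivity).
  change (INR 2) with 2 in Hk.
  C_field; repeat split; first [assumption | C_neq_0].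
Qed.

Lemma watson_term_succ_m (m k : nat) : (k <= m)%nat ->
  watson_term (S m) k = (watson_term m k *
    ((RtoC (INR m) + 1) * (2 * RtoC (INR m) + 1 - RtoC (INR k))
     * (2 * RtoC (INR m) + 2 - RtoC (INR k))
     / ((RtoC (INR m) + 1 - RtoC (INR k)) * (2 * RtoC (INR m) + 1) * (2 * RtoC (INR m) + 2))))%C.
Proof.
  intro Hk. unfold watson_term. rewrite S_INR.
  assert (N1 := poch_neg_2m_neq_0 m k ltac:(lia)).
  assert (N2 := poch_c_neq_0 k).
  assert (N3 := RtoC_fact_neq_0 k).
  assert (Hk' := le_INR _ _ Hk). assert (Hp := pos_INR k). assert (Hm := pos_INR m).
  replace (RtoC (- (INR m + 1))) with (RtoC (- INR m) - 1)%C
    by (rewrite !RtoC_opp, !RtoC_plus; C_ring).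
  replace (RtoC (- (2 * (INR m + 1)))) with (RtoC (- (2 * INR m)) - 1 - 1)%C
    by (rewrite !RtoC_opp, !RtoC_mult, !RtoC_plus; C_ring).
  rewrite (poch_pred_eq (RtoC (- (2 * INR m)) - 1)), (poch_pred_eq (RtoC (- (2 * INR m)))),
    (poch_pred_eq (RtoC (- INR m)))
    by (C_neq_0).
  replace (RtoC (- (2 * INR m))) with (- (2 * RtoC (INR m)))%C in *
    by (rewrite RtoC_opp, RtoC_mult; reflexivity).
  replace (RtoC (- INR m)) with (- RtoC (INR m))%C in * by (rewrite RtoC_opp; reflexivity).
  C_field; repeat split; first [assumption | C_neq_0].
Qed.


Lemma half_add_neq_0 (x y : C) : (x / 2 + y)%C <> RtoC 0 -> (x + y * 2)%C <> RtoC 0.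
Proof.
  assert (D : (2 : C) <> RtoC 0) by (C_neq_0).
  intros H E. apply H. transitivity ((x + y * 2) / 2)%C; [C_field; exact D|].
  rewrite E. C_field.
Qed.

Definition watson_cert (m p : nat) : C :=
  (/ (2 * (2 * RtoC (INR m) + 1) * (c + RtoC (INR m)))
   * (a + RtoC (INR p)) * (b + RtoC (INR p)) * watson_term m p)%C.

Lemma watson_wz_step (m p : nat) : (1 <= m)%nat -> (S p <= m)%nat ->
  (watson_term (S m) (S p) - watson_ratio m * watson_term m (S p)
   = watson_cert m p - watson_cert m (S p))%C.
Proof.
  intros Hm1 Hp. unfold watson_cert.
  rewrite watson_term_succ_m, watson_term_succ_n by lia.
  rewrite S_INR, RtoC_plus.
  apply le_INR in Hp. rewrite S_INR in Hp. assert (Hp0 := pos_INR p).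
  assert (N1 := c_add_neq_0 p). assert (N2 := c_add_neq_0 m).
  unfold watson_ratio, c in *.
  C_field; repeat split; first [solve [auto using half_add_neq_0] | C_neq_0].
Qed.

Lemma watson_wz_first (m : nat) : (1 <= m)%nat ->
  (watson_term (S m) 0 - watson_ratio m * watson_term m 0 = - watson_cert m 0)%C.
Proof.
  intro Hm1. unfold watson_cert. rewrite !watson_term_0.
  assert (Hm := pos_INR m). assert (N := c_add_neq_0 m).
  change (INR 0) with 0. unfold watson_ratio, c in *.
  C_field; repeat split; first [solve [auto using half_add_neq_0] | C_neq_0].
Qed.

Lemma watson_wz_last (m : nat) : (1 <= m)%nat ->
  watson_term (S m) (S m) = watson_cert m m.
Proof.
  intro Hm1. unfold watson_cert.
  rewrite watson_term_succ_n, watson_term_succ_m by lia.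
  rewrite S_INR, RtoC_plus.
  assert (Hm := pos_INR m). assert (N := c_add_neq_0 m).
  unfold c in *.
  C_field; repeat split; first [solve [auto using half_add_neq_0] | C_neq_0].
Qed.

Lemma watson_telescope (m p : nat) : (1 <= m)%nat -> (p <= m)%nat ->
  Csum (fun k => watson_term (S m) k - watson_ratio m * watson_term m k)%C (S p)
  = (- watson_cert m p)%C.
Proof.
  intros Hm1. induction p as [|p IH]; intro Hp.
  - rewrite Csum_S. unfold Csum; simpl. rewrite watson_wz_first by exact Hm1. C_ring.
  - rewrite Csum_S, IH, watson_wz_step by lia. C_ring.
Qed.

Definition watson_sum (m : nat) : C := Csum (watson_term m) (S m).

Lemma watson_sum_succ (m : nat) : (1 <= m)%nat ->
  watson_sum (S m) = (watson_ratio m * watson_sum m)%C.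
Proof.
  intro Hm1. unfold watson_sum. rewrite Csum_S, watson_wz_last by exact Hm1.
  assert (E := watson_telescope m m Hm1 (le_n m)). rewrite Csum_sub_scal in E.
  transitivity ((Csum (watson_term (S m)) (S m) - watson_ratio m * Csum (watson_term m) (S m))
                + watson_ratio m * Csum (watson_term m) (S m) + watson_cert m m)%C; [C_ring|].
  rewrite E. C_ring.
Qed.

Lemma watson_value_succ (m : nat) : watson_value (S m) = (watson_value m * watson_ratio m)%C.
Proof.
  unfold watson_value, watson_ratio. cbn [poch].
  assert (N1 : poch (/ 2) m <> RtoC 0).
  { apply poch_neq_0. intros j _. assert (Hj := pos_INR j). C_neq_0. }
  assert (N2 := poch_c_neq_0 m). assert (N3 := c_add_neq_0 m).
  assert (Hm := pos_INR m).
  C_field; repeat split; first [assumption | C_neq_0].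
Qed.

Lemma watson_sum_1 : watson_sum 1 = watson_value 1.
Proof.
  unfold watson_sum, watson_value, Csum, watson_term. cbn [seq map fold_right poch fact].
  change (INR 0) with 0. change (INR 1) with 1.
  assert (N3 := c_add_neq_0 0). change (INR 0) with 0 in N3.
  assert (D7 : (2 : C) <> RtoC 0) by (C_neq_0).
  unfold c in *. change (INR (1 * 1)) with 1. rewrite !RtoC_opp, !RtoC_mult.
  assert (N4 : (1 + a + b)%C <> RtoC 0).
  { intro E. apply N3. rewrite E. C_field. }
  C_field. exact N4.
Qed.

Theorem watson_sum_eq (m : nat) : (1 <= m)%nat -> watson_sum m = watson_value m.
Proof.
  intro Hm1. induction m as [|m IH]; [lia|].
  destruct (Nat.eq_dec m 0) as [->|Hm]; [exact watson_sum_1|].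
  rewrite watson_sum_succ, watson_value_succ, IH by lia. C_ring.
Qed.

End Watson.

Lemma Cis_RInt_0_oo_gamma_kernel_shift (s mu : C) (n : nat) : 0 < fst s -> 0 < fst mu ->
  Cis_RInt_0_oo (gamma_kernel (s + RtoC (INR n)) mu)
    (poch s n / Cpow mu n * (CGamma s / Cpowc mu s))%C.
Proof.
  intros Hs Hm.
  assert (Hmu : mu <> RtoC 0) by (C_neq_0).
  assert (Hpow : Cpowc mu s <> RtoC 0)
    by (rewrite Cpowc_re_pos by exact Hm; apply Cexp_neq_0).
  induction n as [|n IH].
  - replace (s + RtoC (INR 0))%C with s by (simpl; C_ring).
    replace (poch s 0 / Cpow mu 0 * (CGamma s / Cpowc mu s))%C with (CGamma s / Cpowc mu s)%C
      by (simpl; C_field; exact Hpow).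
    apply Cis_RInt_0_oo_gamma_kernel; assumption.
  - assert (Hsn : 0 < fst (s + RtoC (INR n))%C) by (simpl; generalize (pos_INR n); lra).
    destruct (ex_Cis_RInt_0_oo_gamma_kernel (s + RtoC (INR n) + 1) mu) as [l Hl];
      [simpl in Hsn |- *; lra | exact Hm |].
    assert (E := Cis_RInt_0_oo_gamma_kernel_succ _ _ _ _ Hsn Hm IH Hl).
    replace (s + RtoC (INR (S n)))%C with (s + RtoC (INR n) + 1)%C
      by (rewrite S_INR, RtoC_plus; C_ring).
    replace (poch s (S n) / Cpow mu (S n) * (CGamma s / Cpowc mu s))%C with l; [exact Hl|].
    cbn [poch]. rewrite Cpow_S.
    assert (Hpn := Cpow_nz mu n Hmu).
    replace l with ((s + RtoC (INR n)) * (poch s n / Cpow mu n * (CGamma s / Cpowc mu s)) / mu)%C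
      by (rewrite E; C_field; exact Hmu).
    C_field. repeat split; assumption.
Qed.

Lemma Cis_RInt_0_oo_moment (s mu : C) (n : nat) : 0 < fst s -> 0 < fst mu ->
  Cis_RInt_0_oo
    (fun t => (Cpowc (RtoC t) (s - 1) * Cexp (- (mu * RtoC t)) * Cpow (mu * RtoC t) n)%C)
    (poch s n * (CGamma s / Cpowc mu s))%C.
Proof.
  intros Hs Hm.
  assert (Hpn : Cpow mu n <> RtoC 0)
    by (apply Cpow_nz, C_neq_0_of_fst; lra).
  replace (poch s n * (CGamma s / Cpowc mu s))%C
    with (Cpow mu n * (poch s n / Cpow mu n * (CGamma s / Cpowc mu s)))%C
    by (C_field; split; [rewrite Cpowc_re_pos by exact Hm; apply Cexp_neq_0 | exact Hpn]).
  apply (Cis_RInt_0_oo_ext (fun t => Cpow mu n * gamma_kernel (s + RtoC (INR n)) mu t)%C).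
  - intros t Ht. rewrite gamma_kernel_eq, <- gamma_kernel_mul_pow, Cpow_mult_l by exact Ht.
    C_ring.
  - apply Cis_RInt_0_oo_Cmult_l, Cis_RInt_0_oo_gamma_kernel_shift; assumption.
Qed.

Theorem mainTheorem16 (m : nat) (alpha beta mu : C) :
  (1 <= m)%nat ->
  (forall k : nat, alpha <> RtoC (- INR k)) ->
  (forall k : nat, ((1 + alpha + beta) / 2)%C <> RtoC (- INR k)) ->
  (0 < Re beta)%R ->
  (0 < Re mu)%R ->
  @is_RInt_gen C_R_NormedModule
    (fun t : R =>
       (Cpowc (RtoC t) (beta - 1) * Cexp (- (mu * RtoC t))
        * F22_trunc (RtoC (- INR m)) alpha (RtoC (- (2 * INR m)))
            ((1 + alpha + beta) / 2) (mu * RtoC t) m)%C)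
    (at_right 0) (Rbar_locally p_infty)
    (CGamma beta / Cpowc mu beta
     * (poch ((1 + alpha) / 2) m * poch ((1 + beta) / 2) m
        / (poch (/ 2) m * poch ((1 + alpha + beta) / 2) m)))%C.
Proof.
  intros Hm1 _ Hc Hb Hmu. unfold Re in Hb, Hmu.
  set (X := (CGamma beta / Cpowc mu beta)%C).
  set (k := fun n => (poch (RtoC (- INR m)) n * poch alpha n
             / (poch (RtoC (- (2 * INR m))) n * poch ((1 + alpha + beta) / 2) n)
             / RtoC (INR (fact n)))%C).
  replace (X * _)%C with (Csum (fun n => k n * (poch beta n * X)) (S m))%C.
  - unfold F22_trunc.
    apply (Cis_RInt_0_oo_fold_sum _
      (fun n t => poch (RtoC (- INR m)) n * poch alpha n
         / (poch (RtoC (- (2 * INR m))) n * poch ((1 + alpha + beta) / 2) n)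
         * Cpow (mu * RtoC t) n / RtoC (INR (fact n)))%C).
    intros n _.
    apply (Cis_RInt_0_oo_ext (fun t => k n * (Cpowc (RtoC t) (beta - 1)
             * Cexp (- (mu * RtoC t)) * Cpow (mu * RtoC t) n))%C);
      [intros; unfold k, Cdiv; C_ring|].
    apply Cis_RInt_0_oo_Cmult_l, Cis_RInt_0_oo_moment; assumption.
  - transitivity (X * watson_sum alpha beta m)%C.
    + unfold watson_sum. rewrite <- Csum_scal. unfold Csum. f_equal. apply map_ext. intro n.
      unfold k, watson_term, Cdiv. C_ring.
    + rewrite watson_sum_eq by assumption. reflexivity.
Qed.
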